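(* Let $p$ be a prime and let $A_p$ be a non-zero $p$-primary Abelian group. Then $\mathrm{End}\,A_p$ is centrally essential if and only if $A_p\cong Z_{p^k}$ for some positive integer $k$ or $A_p\cong Z_{p^\infty}$.
   Context: All rings are associative with non-zero identity. A ring $R$ is centrally essential if for every non-zero $a\in R$ there exist non-zero elements $x,y$ of the center of $R$ with $ax=y$. $Z_{p^k}$ is the cyclic group of order $p^k$ and $Z_{p^\infty}$ is the quasi-cyclic (Prüfer) $p$-group. *)

From mathcomp Require Import all_boot all_order all_algebra all_field.
Set Implicit Arguments. Unset Strict Implicit. Unset Printing Implicit Defensive.
Import GRing.Theory Num.Theory.
Local Open Scope ring_scope.

(* Additive endomorphisms of an abelian group G : zmodType form the ring End G
   (multiplication = composition).  Elements of End G are additive maps G -> G,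
   compared extensionally. *)
Definition is_endo (G : zmodType) (f : G -> G) : Prop :=
  forall x y, f (x + y) = f x + f y.

Definition endo_zero (G : zmodType) (f : G -> G) : Prop := forall x, f x = 0.

Definition endo_central (G : zmodType) (f : G -> G) : Prop :=
  is_endo f /\ forall g : G -> G, is_endo g -> forall x, f (g x) = g (f x).

Definition End_centrally_essential (G : zmodType) : Prop :=
  forall a : G -> G, is_endo a -> ~ endo_zero a ->
    exists x y : G -> G,
      [/\ endo_central x, endo_central y, ~ endo_zero x, ~ endo_zero y
        & forall v, a (x v) = y v].

Definition p_primary (p : nat) (G : zmodType) : Prop :=
  forall x : G, exists n : nat, x *+ (p ^ n) = 0.

(* G is isomorphic to the cyclic group Z_{p^k} = 'Z_(p^k) (for p prime, k > 0,
   p^k >= 2 so 'Z_(p^k) is genuinely Z/p^kZ). *)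
Definition iso_Zpk (p k : nat) (G : zmodType) : Prop :=
  exists f : G -> 'Z_(p ^ k),
    (forall x y, f (x + y) = f x + f y) /\ bijective f.

(* G is isomorphic to the quasi-cyclic group Z_{p^oo}, realised as the
   multiplicative group of all complex p-power roots of unity. *)
Definition iso_Zpinf (p : nat) (G : zmodType) : Prop :=
  exists f : G -> algC,
    [/\ forall x y, f (x + y) = f x * f y,
        injective f
      & forall z : algC, (exists n : nat, z ^+ (p ^ n) = 1) <-> exists x, f x = z].

From mathcomp Require Import all_boot all_order all_algebra all_field.
From mathcomp Require Import boolp classical_sets.
Set Implicit Arguments. Unset Strict Implicit. Unset Printing Implicit Defensive.
Import GRing.Theory Num.Theory.
Local Open Scope ring_scope.

(** Commutativity of [End A] makes it centrally essential (take [x = 1]), and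
    for [Z_(p^k)] and [Z_(p^oo)] every element lies in a cyclic subgroup that is
    stable under all endomorphisms, which forces [End A] to be commutative.

    Conversely, in a centrally essential ring every idempotent [e] is left
    semicentral ([r e = e r e]): otherwise [a = r e - e r e] is non-zero, and a
    central non-zero multiple [a x] would commute with [e] although [a e = a]
    and [e a = 0]. If [A] had two independent elements of order [p], one would
    get an idempotent endomorphism [pi] onto a direct summand [C] of [A] and an
    endomorphism [r] moving [C] outside [C], contradicting [r pi = pi r pi].
    When [A] is [p]-divisible, [C] is a Prüfer subgroup, which is divisible and
    hence a summand; otherwise [C] is a pure cyclic subgroup of finite exponent,
    again a summand. Both splittings come from a Zorn's lemma extension theorem
    for homomorphisms out of [p]-primary groups. Hence the socle of [A] is
    cyclic, and a [p]-primary group with cyclic socle is [Z_(p^k)] if it has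
    bounded exponent and [Z_(p^oo)] otherwise. *)

Lemma ex_threshold (P : nat -> Prop) n : P 0%N -> ~ P n -> exists k, P k /\ ~ P k.+1.
Proof.
elim: n => [|n IH] P0 Pn; first by [].
by have [Pn'|nPn] := pselect (P n); [exists n | exact: IH].
Qed.

Lemma functional_graph_fun (A B : Type) (R : A -> B -> Prop) : inhabited B ->
  (forall a b b', R a b -> R a b' -> b = b') ->
  exists f : A -> B, forall a b, R a b -> f a = b.
Proof.
move=> [b0] Rfun.
have Rex a : exists b, (exists b, R a b) -> R a b.
  have [[b Rab]|noR] := pselect (exists b, R a b); first by exists b.
  by exists b0 => /noR.
have [f Rf] := choice Rex.
by exists f => a b Rab; apply: Rfun (Rf a (ex_intro _ b Rab)) Rab.
Qed.

Lemma dependent_choice (T : Type) (P : nat -> T -> Prop) (R : T -> T -> Prop) x0 :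
  P 0%N x0 -> (forall n x, P n x -> exists y, P n.+1 y /\ R y x) ->
  exists u : nat -> T, u 0%N = x0 /\ forall n, P n (u n) /\ R (u n.+1) (u n).
Proof.
move=> Px0 step.
have step' (nx : nat * T) : exists y, P nx.1 nx.2 -> P nx.1.+1 y /\ R y nx.2.
  have [/step[y Py]|nP] := pselect (P nx.1 nx.2); first by exists y.
  by exists x0 => /nP.
have [h hh] := choice step'.
pose u := nat_rect (fun _ => T) x0 (fun n x => h (n, x)).
have Pu n : P n (u n) by elim: n => //= n IH; case: (hh (n, u n) IH).
by exists u; split=> // n; split=> //; case: (hh (n, u n) (Pu n)).
Qed.

Lemma addr_eq_subr (V : zmodType) (x y z w : V) : x + y = z + w <-> x - z = w - y.
Proof.
split=> h; last by rewrite -[x](subrK z) h addrAC subrK addrC.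
by apply/eqP; rewrite subr_eq addrAC eq_sym subr_eq h addrC.
Qed.

Section AdditiveMaps.
Variables (G H : zmodType) (f : G -> H).
Hypothesis fD : {morph f : x y / x + y}.

Lemma addmorph0 : f 0 = 0.
Proof. by apply: (@addrI _ (f 0)); rewrite -fD !addr0. Qed.

Lemma addmorphMn x n : f (x *+ n) = f x *+ n.
Proof. by elim: n => [|n IH]; rewrite ?mulr0n ?addmorph0 // !mulrS fD IH. Qed.

Lemma addmorphN x : f (- x) = - f x.
Proof. by apply/eqP; rewrite -subr_eq0 opprK -fD addNr addmorph0. Qed.

Lemma addmorphB x y : f (x - y) = f x - f y.
Proof. by rewrite fD addmorphN. Qed.

End AdditiveMaps.

Lemma mulrn_modn (G : zmodType) (x : G) N a : x *+ N = 0 -> x *+ a = x *+ (a %% N).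
Proof. by move=> xN; rewrite {1}(divn_eq a N) mulrnDr mulnC mulrnA xN mul0rn add0r. Qed.

Lemma mulrn_gcdn_eq0 (G : zmodType) (x : G) m n :
  x *+ m = 0 -> x *+ n = 0 -> x *+ gcdn m n = 0.
Proof.
have [->|m_gt0] := posnP m; first by rewrite gcd0n.
move=> xm xn; have [km kn E _] := egcdnP n m_gt0.
have := congr1 (fun k => x *+ k) E.
by rewrite /= mulrnDr [(km * m)%N]mulnC [(kn * n)%N]mulnC !mulrnA xm xn !mul0rn add0r.
Qed.

Lemma mulrn_Zp_add (G : zmodType) q (x : G) (a b : 'Z_q) : (1 < q)%N -> x *+ q = 0 ->
  x *+ (a + b)%R = x *+ a + x *+ b.
Proof.
move=> q_gt1 xq; have xq' : x *+ (Zp_trunc q).+2 = 0 by rewrite Zp_cast.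
by rewrite /= -(mulrn_modn _ xq') mulrnDr.
Qed.

Lemma mulrn_Zp_nat (G : zmodType) q (x : G) k : (1 < q)%N -> x *+ q = 0 ->
  x *+ (k%:R : 'Z_q) = x *+ k.
Proof. by move=> q_gt1 xq; rewrite val_Zp_nat // -mulrn_modn. Qed.

Lemma mulrn_Zp1 (G : zmodType) q (x : G) : x *+ (1%R : 'Z_q) = x.
Proof. by rewrite /= modn_small. Qed.

Lemma mulrn_chain (G : zmodType) p (u : nat -> G) : (forall n, u n.+1 *+ p = u n) ->
  forall n k, u n = u (k + n)%N *+ p ^ k.
Proof.
move=> up n; elim=> [|k IH]; first by rewrite expn0 mulr1n.
by rewrite IH -(up (k + n)%N) expnS mulrnA mulrnAC.
Qed.

Lemma expr_chain (R : pzSemiRingType) p (u : nat -> R) :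
  (forall n, u n.+1 ^+ p = u n) ->
  forall n k, u n = u (k + n)%N ^+ (p ^ k).
Proof.
move=> up n; elim=> [|k IH]; first by rewrite expn0 expr1.
by rewrite IH -(up (k + n)%N) expnS exprM.
Qed.

Lemma prim_root_pS_lift (R : nzRingType) p n (y : R) : prime p ->
  (p ^ n.+1).-primitive_root (y ^+ p) -> (p ^ n.+2).-primitive_root y.
Proof.
move=> p_prime yp; have y1 : y ^+ (p ^ n.+2) = 1 by rewrite expnS exprM prim_expr_order.
have pn_gt0 : (0 < p ^ n.+2)%N by rewrite expn_gt0 prime_gt0.
have [m ym /(dvdn_pfactor _ _ p_prime)[i]] := prim_order_exists pn_gt0 y1.
rewrite leq_eqVlt => /orP[/eqP-> <- //|i_lt mE].
have : (y ^+ p) ^+ (p ^ n) == 1.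
  by rewrite -exprM -expnS -(prim_order_dvd ym) mE dvdn_exp2l.
by rewrite -(prim_order_dvd yp) dvdn_Pexp2l ?prime_gt1 // ltnn.
Qed.

Section PrimaryOrder.
Variables (G : zmodType) (p : nat).
Hypothesis p_prime : prime p.

Definition order_pS n (e : G) := e *+ p ^ n.+1 = 0 /\ e *+ p ^ n <> 0.

Lemma order_pS_mulrn_eq0 n e : order_pS n e ->
  forall j, e *+ j = 0 <-> (p ^ n.+1 %| j)%N.
Proof.
move=> [en1 en] j; split; last by move=> /dvdnP[k ->]; rewrite mulnC mulrnA en1 mul0rn.
move=> ej; have := dvdn_gcdr j (p ^ n.+1).
case/(dvdn_pfactor _ _ p_prime) => i; rewrite leq_eqVlt => /orP[/eqP-> <-|lt_in].
  exact: dvdn_gcdl.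
move=> gE; have := mulrn_gcdn_eq0 ej en1; rewrite gE => ei.
by case: en; rewrite -(subnK (lt_in : (i <= n)%N)) expnD mulnC mulrnA ei mul0rn.
Qed.

Lemma order_pS_eqmod n e : order_pS n e ->
  forall a b, e *+ a = e *+ b <-> (a = b %[mod p ^ n.+1])%N.
Proof.
move=> eo a b; wlog le_ab : a b / (a <= b)%N.
  by move=> wl; case: (leqP a b) => [|/ltnW] /wl // ba; split=> /esym/ba.
have -> : e *+ b = e *+ a + e *+ (b - a) by rewrite -mulrnDr subnKC.
rewrite -{1}[e *+ a]addr0; split=> [/addrI/esym/(order_pS_mulrn_eq0 eo)|/eqP].
  by move=> ba; apply/eqP; rewrite eq_sym eqn_mod_dvd.
by rewrite eq_sym eqn_mod_dvd // => /(order_pS_mulrn_eq0 eo) ->.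
Qed.

Lemma order_pS_exists (y : G) n : p_primary p G -> y *+ p ^ n <> 0 ->
  exists z, order_pS n z.
Proof.
move=> pG yn; have [N yN] := pG y.
have y0 : y *+ p ^ 0 *+ p ^ n <> 0 by rewrite expn0 mulr1n.
have yN' : ~ (y *+ p ^ N *+ p ^ n <> 0) by rewrite yN mul0rn; apply.
have [k [yk /contrapT ykS]] :=
  @ex_threshold (fun k => y *+ p ^ k *+ p ^ n <> 0) N y0 yN'.
exists (y *+ p ^ k); split=> //.
by rewrite -mulrnA -expnD addnS -addSn expnD mulrnA.
Qed.

Definition cyclic_socle := forall s t : G, s *+ p = 0 -> t *+ p = 0 -> s != 0 ->
  exists i, t = s *+ i.

Lemma cyclic_socle_of_gen (w : G) : w *+ p = 0 ->
  (forall u, u *+ p = 0 -> exists i, u = w *+ i) -> cyclic_socle.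
Proof.
move=> wp wgen s t sp tp s0.
have [[i si] [j tj]] := (wgen s sp, wgen t tp).
have wo : order_pS 0 w.
  rewrite /order_pS expn1 expn0 mulr1n; split=> // w0.
  by rewrite si w0 mul0rn eqxx in s0.
have ndvd : ~~ (p %| i)%N.
  apply: contraNN s0 => /dvdnP[k ik]; by rewrite si ik mulnC mulrnA wp mul0rn.
have i_gt0 : (0 < i)%N by case: (posnP i) ndvd => [->|//]; rewrite dvdn0.
have cop : coprime i p by rewrite coprime_sym prime_coprime.
have [km kn E _] := egcdnP p i_gt0.
have ws : w = s *+ km.
  rewrite si -mulrnA mulnC -{1}[w]mulr1n; apply/(order_pS_eqmod wo).
  by rewrite expn1 E (eqP cop) modnMDl.
by exists (km * j)%N; rewrite tj ws mulrnA.
Qed.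

Lemma cyclic_socle_mulrn n (e x : G) : cyclic_socle -> order_pS n e ->
  x *+ p ^ n.+1 = 0 -> exists i, x = e *+ i.
Proof.
move=> cs; elim: n e x => [|n IH] e x [en1 en] xn1.
  by move: en1 en xn1; rewrite expn1 expn0 mulr1n => ep /eqP e0 xp; apply: cs.
have ep : order_pS n (e *+ p) by split; rewrite -mulrnA -expnS.
have xp : x *+ p *+ p ^ n.+1 = 0 by rewrite -mulrnA -expnS.
have [m xm] := IH _ _ ep xp.
have ep1 : e *+ p ^ n.+1 *+ p = 0 by rewrite -mulrnA -expnSr.
have xmp : (x - e *+ m) *+ p = 0 by rewrite mulrnBl xm mulrnAC subrr.
have [|j ej] := cs _ _ ep1 xmp; first exact/eqP.
by exists (m + p ^ n.+1 * j)%N; rewrite mulrnDr mulrnA -ej addrC subrK.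
Qed.

End PrimaryOrder.

(** * Endomorphism rings that are commutative *)

Definition endo_commutative (G : zmodType) :=
  forall g h : G -> G, is_endo g -> is_endo h -> forall x, g (h x) = h (g x).

Definition locally_invariant_cyclic (G : zmodType) := forall x : G,
  exists2 e, (exists i, x = e *+ i) & forall g, is_endo g -> exists a, g e = e *+ a.

Lemma endo_commutative_of_locally_invariant_cyclic (G : zmodType) :
  locally_invariant_cyclic G -> endo_commutative G.
Proof.
move=> licG g h gE hE x; have [e [i ->] eInv] := licG x.
have [[a ga] [b hb]] := (eInv g gE, eInv h hE).
by rewrite !addmorphMn // ga hb !addmorphMn // ga hb -!mulrnA mulnCA.
Qed.

Lemma centrally_essential_of_endo_commutative (G : zmodType) :
  (exists x : G, x != 0) -> endo_commutative G -> End_centrally_essential G.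
Proof.
move=> [x0 x0_neq0] commG a aE a_neq0; exists id, a; split=> //.
- by split=> // g gE v; apply: (commG a g aE gE).
- by move=> id0; rewrite [x0]id0 eqxx in x0_neq0.
Qed.

Lemma iso_Zpk_locally_invariant_cyclic p k (G : zmodType) :
  iso_Zpk p k G -> locally_invariant_cyclic G.
Proof.
move=> [f [fD [f' f'K fK]]]; pose e := f' 1.
have eGen y : y = e *+ f y.
  by apply: (can_inj f'K); rewrite addmorphMn // fK natr_Zp.
by move=> x; exists e => [|g _]; [exists (f x) | exists (f (g e))].
Qed.

Lemma iso_Zpinf_locally_invariant_cyclic p (G : zmodType) : (0 < p)%N ->
  p_primary p G -> iso_Zpinf p G -> locally_invariant_cyclic G.
Proof.
move=> p_gt0 pG [f [fD f_inj fIm]].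
have f0 : f 0 = 1.
  have [x1 fx1] : exists x, f x = 1 by apply/fIm; exists 0%N; rewrite expr1n.
  by apply: (@mulfI _ (f x1)); rewrite -?fD fx1 ?oner_eq0 ?addr0 ?mulr1.
have fMn y n : f (y *+ n) = f y ^+ n.
  by elim: n => [|n IH]; rewrite ?mulr0n ?f0 // mulrS fD IH exprS.
move=> x; have [n xn] := pG x.
have [z zPrim] : {z : algC | (p ^ n).-primitive_root z}.
  by apply: C_prim_root_exists; rewrite expn_gt0 p_gt0.
have [e fe] : exists e, f e = z by apply/fIm; exists n; apply: prim_expr_order.
have eGen y : y *+ p ^ n = 0 -> exists i, y = e *+ i.
  move=> yn; have fy1 : f y ^+ (p ^ n) = 1 by rewrite -fMn yn f0.
  have [i fyi] := prim_rootP zPrim fy1.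
  by exists i; apply: f_inj; rewrite fMn fe.
exists e => [|g gE]; first exact: eGen.
apply: eGen; rewrite -addmorphMn //.
have -> : e *+ p ^ n = 0 by apply: f_inj; rewrite fMn fe f0 prim_expr_order.
exact: addmorph0.
Qed.

(** * Extending homomorphisms out of p-primary groups *)

Section Extension.
Variables (G D : zmodType) (p : nat) (S : G -> Prop) (f0 : G -> D) (T : D -> Prop).
Hypotheses (p_prime : prime p) (pG : p_primary p G).
Hypotheses (S0 : S 0) (SD : forall x y, S x -> S y -> S (x + y)).
Hypothesis f0D : forall x y, S x -> S y -> f0 (x + y) = f0 x + f0 y.
Hypotheses (f0T : forall x, S x -> T (f0 x)) (T0 : T 0).
Hypothesis TD : forall a b, T a -> T b -> T (a + b).
(* What is needed to extend a partial homomorphism to an element [x] whose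
   multiple [x *+ p] already has the value [b]; it holds e.g. when [T] is
   [p]-divisible. *)
Hypothesis f0_pdiv : forall (x : G) (b : D), T b ->
  (forall m, S (x *+ p *+ m) -> f0 (x *+ p *+ m) = b *+ m) ->
  exists2 d, T d & d *+ p = b.

Lemma TMn a m : T a -> T (a *+ m).
Proof. by move=> Ta; elim: m => [|m IH]; rewrite ?mulr0n // mulrS; apply: TD. Qed.

Lemma f0_0 : f0 0 = 0.
Proof. by apply: (@addrI _ (f0 0)); rewrite -f0D ?addr0. Qed.

Local Open Scope classical_set_scope.

Definition ext_graph (g : set (G * D)) :=
  [/\ forall x a b, g (x, a) -> g (x, b) -> a = b,
      forall x y a b, g (x, a) -> g (y, b) -> g (x + y, a + b),
      forall x, S x -> g (x, f0 x)
    & forall x a, g (x, a) -> T a].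

Section ExtGraph.
Variable g : set (G * D).
Hypothesis gE : ext_graph g.

Lemma ext_graph_fun x a b : g (x, a) -> g (x, b) -> a = b.
Proof. by case: gE => gf _ _ _; apply: gf. Qed.

Lemma ext_graphD x y a b : g (x, a) -> g (y, b) -> g (x + y, a + b).
Proof. by case: gE => _ gD _ _; apply: gD. Qed.

Lemma ext_graph_f0 x : S x -> g (x, f0 x).
Proof. by case: gE => _ _ gS _; apply: gS. Qed.

Lemma ext_graphT x a : g (x, a) -> T a.
Proof. by case: gE => _ _ _ gT; apply: gT. Qed.

Lemma ext_graph0 : g (0, 0).
Proof. by have := ext_graph_f0 S0; rewrite f0_0. Qed.

Lemma ext_graphMn x a m : g (x, a) -> g (x *+ m, a *+ m).
Proof.
move=> gxa; elim: m => [|m IH]; first by rewrite !mulr0n; apply: ext_graph0.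
by rewrite !mulrS; apply: ext_graphD.
Qed.

Lemma ext_graphN x a : g (x, a) -> g (- x, - a).
Proof.
move=> gxa; have [r xr] := pG x.
have pr_gt0 : (0 < p ^ r)%N by rewrite expn_gt0 prime_gt0.
have ar : a *+ p ^ r = 0.
  by apply: ext_graph_fun (ext_graphMn _ gxa) _; rewrite xr; apply: ext_graph0.
have opp_pred (V : zmodType) (v : V) : v *+ p ^ r = 0 -> - v = v *+ (p ^ r).-1.
  by move=> vr; apply/eqP; rewrite eq_sym -subr_eq0 opprK -mulrSr prednK // vr.
by rewrite (opp_pred _ _ xr) (opp_pred _ _ ar); apply: ext_graphMn.
Qed.

Lemma ext_graphB x y a b : g (x, a) -> g (y, b) -> g (x - y, a - b).
Proof. by move=> gxa /ext_graphN; apply: ext_graphD. Qed.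

End ExtGraph.

Section OneStep.
Variables (g : set (G * D)) (x : G) (d : D).
Hypotheses (gE : ext_graph g) (x_notin : ~ exists a, g (x, a)).
Hypotheses (gxp : g (x *+ p, d *+ p)) (Td : T d).

Lemma ext_graph_mulrn_value j c : g (x *+ j, c) -> c = d *+ j.
Proof.
move=> gc; have [/dvdnP[i ji]|ndvd] := boolP (p %| j)%N.
  rewrite ji mulnC mulrnA in gc.
  by rewrite (ext_graph_fun gE gc (ext_graphMn gE i gxp)) -mulrnA ji mulnC.
case: x_notin; have [r xr] := pG x.
have j_gt0 : (0 < j)%N by case: (posnP j) ndvd => [->|//]; rewrite dvdn0.
have cop : coprime j (p ^ r) by rewrite coprime_sym coprimeXl // prime_coprime.
have [km kn E _] := egcdnP (p ^ r) j_gt0.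
exists (c *+ km); have := ext_graphMn gE km gc.
by rewrite -mulrnA mulnC E (eqP cop) mulrnDr [(kn * _)%N]mulnC mulrnA xr mul0rn add0r.
Qed.

Lemma ext_graph_shift_fun y1 y2 a1 a2 m1 m2 : g (y1, a1) -> g (y2, a2) ->
  y1 + x *+ m1 = y2 + x *+ m2 -> a1 + d *+ m1 = a2 + d *+ m2.
Proof.
wlog le_m : y1 y2 a1 a2 m1 m2 / (m1 <= m2)%N.
  move=> wl g1 g2 E; case: (leqP m1 m2) => [le|/ltnW le]; first exact: wl E.
  by apply/esym; apply: wl (esym E).
move=> g1 g2 /addr_eq_subr E; apply/addr_eq_subr.
rewrite -mulrnBr // in E; rewrite -mulrnBr //; apply: ext_graph_mulrn_value.
by rewrite -E; apply: ext_graphB.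
Qed.

Definition ext_graph_shift : set (G * D) :=
  [set z | exists y a m, g (y, a) /\ z = (y + x *+ m, a + d *+ m)].

Lemma ext_graph_shiftE : ext_graph ext_graph_shift.
Proof.
split.
- move=> z a1 a2 [y1 [c1 [m1 [g1 [-> ->]]]]] [y2 [c2 [m2 [g2 [E ->]]]]].
  exact: ext_graph_shift_fun g1 g2 E.
- move=> z1 z2 a1 a2 [y1 [c1 [m1 [g1 [-> ->]]]]] [y2 [c2 [m2 [g2 [-> ->]]]]].
  exists (y1 + y2), (c1 + c2), (m1 + m2)%N; split; first exact: ext_graphD.
  by rewrite !mulrnDr (addrACA y1) (addrACA c1).
- move=> z Sz; exists z, (f0 z), 0%N; split; last by rewrite !mulr0n !addr0.
  exact: ext_graph_f0.
- move=> z a [y [c [m [gyc [_ ->]]]]]; apply: TD; last exact: TMn.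
  exact: ext_graphT gyc.
Qed.

Lemma ext_graph_shift_proper : g `<` ext_graph_shift.
Proof.
split=> [[y a] gya|sub]; first by exists y, a, 0%N; rewrite !mulr0n !addr0.
apply: x_notin; exists d; apply: sub; exists 0, 0, 1%N.
by rewrite !add0r !mulr1n; split=> //; apply: ext_graph0.
Qed.

End OneStep.

Lemma ext_graph_step g x : ext_graph g -> ~ (exists a, g (x, a)) ->
  (exists b, g (x *+ p, b)) -> exists2 h, g `<` h & ext_graph h.
Proof.
move=> gE x_notin [b gb].
have compat m : S (x *+ p *+ m) -> f0 (x *+ p *+ m) = b *+ m.
  by move=> Sm; exact: (ext_graph_fun gE (ext_graph_f0 gE Sm) (ext_graphMn gE m gb)).
have [d Td db] := f0_pdiv (ext_graphT gE gb) compat.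
rewrite -db in gb; exists (ext_graph_shift g x d).
  exact: ext_graph_shift_proper.
exact: ext_graph_shiftE.
Qed.

(* Zorn's lemma is applied to these sets because the union of the empty chain is
   empty, hence not an [ext_graph]. *)
Definition ext_graph_or_empty (g : set (G * D)) := ext_graph g \/ g = set0.

Lemma ext_graph_or_empty_bigcup (F : set (set (G * D))) :
  F `<=` ext_graph_or_empty -> total_on F subset ->
  ext_graph_or_empty (\bigcup_(X in F) X).
Proof.
move=> FP Ftot.
have [[X0 [FX0 X0E]]|noE] := pselect (exists X, F X /\ ext_graph X); last first.
  right; apply: bigcup0 => X FX.
  by case: (FP X FX) => // XE; case: noE; exists X.
have memE X z : F X -> X z -> ext_graph X.
  by move=> FX Xz; case: (FP X FX) => // Xempty; rewrite Xempty in Xz.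
have both X1 X2 z1 z2 : F X1 -> F X2 -> X1 z1 -> X2 z2 ->
    exists X, [/\ F X, X z1 & X z2].
  move=> F1 F2 h1 h2; case: (Ftot X1 X2 F1 F2) => sub.
    by exists X2; split=> //; apply: sub.
  by exists X1; split=> //; apply: sub.
left; split.
- move=> x a b [X1 F1 h1] [X2 F2 h2]; have [X [FX Xa Xb]] := both _ _ _ _ F1 F2 h1 h2.
  exact: (ext_graph_fun (memE _ _ FX Xa) Xa Xb).
- move=> x y a b [X1 F1 h1] [X2 F2 h2]; have [X [FX Xa Xb]] := both _ _ _ _ F1 F2 h1 h2.
  by exists X => //; exact: (ext_graphD (memE _ _ FX Xa) Xa Xb).
- by move=> x Sx; exists X0 => //; apply: ext_graph_f0.
- by move=> x a [X FX Xa]; exact: (ext_graphT (memE _ _ FX Xa) Xa).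
Qed.

Lemma ext_graph_maximal :
  exists2 A, ext_graph A & forall B, A `<` B -> ~ ext_graph B.
Proof.
have [A [[AE|A0] Amax]] := Zorn_bigcup ext_graph_or_empty_bigcup.
  by exists A => // B AB BE; apply: (Amax B AB); left.
pose g0 := [set z : G * D | S z.1 /\ z.2 = f0 z.1].
have g0E : ext_graph g0.
  split=> [x a b [_ /= ->] [_ /= ->] // | x y a b [Sx /= ->] [Sy /= ->] | x Sx // |
           x a [Sx /= ->]].
  - by split; [apply: SD | rewrite /= f0D].
  - exact: f0T.
case: (Amax g0); last by left.
by rewrite A0; split=> // /(_ (0, f0 0)); apply.
Qed.

Lemma ext_graph_total A : ext_graph A -> (forall B, A `<` B -> ~ ext_graph B) ->
  forall x, exists a, A (x, a).
Proof.
move=> AE Amax x; apply: contrapT => x_notin; have [N xN] := pG x.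
have x0 : ~ (exists a, A (x *+ p ^ 0, a)) by rewrite expn0 mulr1n.
have xN' : ~ ~ (exists a, A (x *+ p ^ N, a)).
  by rewrite xN; apply; exists 0; apply: ext_graph0.
have [k [xk /contrapT xkS]] :=
  @ex_threshold (fun k => ~ exists a, A (x *+ p ^ k, a)) N x0 xN'.
have [|B AB BE] := ext_graph_step AE xk; last exact: Amax AB BE.
by rewrite -mulrnA -expnSr.
Qed.

Theorem additive_extension : exists f : G -> D,
  [/\ {morph f : x y / x + y}, forall x, S x -> f x = f0 x & forall x, T (f x)].
Proof.
have [A AE Amax] := ext_graph_maximal.
have [f Af] := choice (ext_graph_total AE Amax).
exists f; split=> [x y | x Sx | x]; last exact: (ext_graphT AE (Af x)).
  exact: (ext_graph_fun AE (Af (x + y)) (ext_graphD AE (Af x) (Af y))).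
exact: (ext_graph_fun AE (Af x) (ext_graph_f0 AE Sx)).
Qed.

End Extension.

Section PrimaryExtensions.
Variables (G : zmodType) (p : nat).
Hypotheses (p_prime : prime p) (pG : p_primary p G).

Lemma pdivisible_summand (Dv : G -> Prop) : Dv 0 ->
  (forall x y, Dv x -> Dv y -> Dv (x + y)) ->
  (forall b, Dv b -> exists2 d, Dv d & d *+ p = b) ->
  exists pi : G -> G, [/\ is_endo pi, forall x, Dv (pi x) & forall x, Dv x -> pi x = x].
Proof.
move=> Dv0 DvD Dvdiv; have [pi [piE piId piDv]] := @additive_extension G G p Dv id Dv
  p_prime pG Dv0 DvD (fun _ _ _ _ => erefl) (fun _ Dx => Dx) Dv0 DvD
  (fun _ b Dvb _ => Dvdiv b Dvb).
by exists pi.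
Qed.

Lemma pdivisible_hom_extension (D : zmodType) n (e : G) (t : D) :
  (forall b : D, exists d, d *+ p = b) -> order_pS p n e -> t *+ p ^ n.+1 = 0 ->
  exists2 f : G -> D, {morph f : x y / x + y} & f e = t.
Proof.
move=> Ddiv eO tq; pose R y a := exists i, y = e *+ i /\ a = t *+ i.
have Rfun y a b : R y a -> R y b -> a = b.
  move=> [i [-> ->]] [j [/(order_pS_eqmod p_prime eO) eij ->]].
  by rewrite (mulrn_modn i tq) eij -mulrn_modn.
have [f0 f0R] := functional_graph_fun (inhabits 0) Rfun.
have f0E i : f0 (e *+ i) = t *+ i by apply: f0R; exists i.
pose S y := exists i, y = e *+ i.
have S0 : S 0 by exists 0%N.
have SD y z : S y -> S z -> S (y + z).
  by move=> [i ->] [j ->]; exists (i + j)%N; rewrite mulrnDr.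
have f0D y z : S y -> S z -> f0 (y + z) = f0 y + f0 z.
  by move=> [i ->] [j ->]; rewrite -mulrnDr !f0E mulrnDr.
have [f [fD fS _]] := @additive_extension G D p S f0 (fun _ => True)
  p_prime pG S0 SD f0D (fun _ _ => I) I (fun _ _ _ _ => I)
  (fun _ b _ _ => let: ex_intro d db := Ddiv b in ex_intro2 _ _ d I db).
by exists f; rewrite // -[e]mulr1n fS ?f0E ?mulr1n //; exists 1%N.
Qed.

End PrimaryExtensions.

(** * Centrally essential endomorphism rings have cyclic socle *)

Lemma centrally_essential_idem_semicentral (G : zmodType) :
  End_centrally_essential G -> forall e r : G -> G, is_endo e -> is_endo r ->
  (forall x, e (e x) = e x) -> forall x, r (e x) = e (r (e x)).
Proof.
move=> ceG e r eE rE e_idem x; apply: contrapT => rex.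
pose a x := r (e x) - e (r (e x)).
have aE : is_endo a by move=> u v; rewrite /a eE rE eE opprD addrACA.
have a_neq0 : ~ endo_zero a.
  by move=> a0; apply: rex; apply/eqP; rewrite -subr_eq0; exact/eqP/(a0 x).
have [X [Y [[XE Xc] [YE Yc] _ Y_neq0 aXY]]] := ceG a aE a_neq0.
have ae z : a (e z) = a z by rewrite /a e_idem.
have ea z : e (a z) = 0 by rewrite /a addmorphB // e_idem subrr.
by apply: Y_neq0 => v; rewrite -aXY -ae -Xc // aXY Yc // -aXY ea.
Qed.

Lemma prufer_subgroup (G : zmodType) p (s : G) : prime p ->
  (forall x : G, exists y, y *+ p = x) -> s *+ p = 0 -> s != 0 ->
  exists Dv : G -> Prop, [/\ Dv 0, Dv s, forall x y, Dv x -> Dv y -> Dv (x + y),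
    forall b, Dv b -> exists2 d, Dv d & d *+ p = b
  & forall t, Dv t -> t *+ p = 0 -> exists i, t = s *+ i].
Proof.
move=> p_prime Gdiv sp s_neq0.
have [es [es0 esP]] : exists es : nat -> G, es 0%N = s /\
    forall n, es n *+ p ^ n = s /\ es n.+1 *+ p = es n.
  apply: (@dependent_choice _ (fun n e => e *+ p ^ n = s) (fun y x => y *+ p = x)).
    by rewrite expn0 mulr1n.
  by move=> n e es; have [y ye] := Gdiv e; exists y; rewrite expnS mulrnA ye.
have esO n : order_pS p n (es n).
  by case: (esP n) => esn _; split; rewrite ?expnSr ?mulrnA esn //; apply/eqP.
have esp n : es n.+1 *+ p = es n by case: (esP n).
exists (fun y => exists n m, y = es n *+ m); split.
- by exists 0%N, 0%N.
- by exists 0%N, 1%N; rewrite es0.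
- move=> _ _ [n1 [m1 ->]] [n2 [m2 ->]].
  exists (n2 + n1)%N, (p ^ n2 * m1 + p ^ n1 * m2)%N.
  rewrite (mulrn_chain esp n1 n2) (mulrn_chain esp n2 n1) addnC.
  by rewrite mulrnDr !mulrnA addnC.
- by move=> _ [n [m ->]]; exists (es n.+1 *+ m); [exists n.+1, m | rewrite mulrnAC esp].
move=> _ [n [m ->]]; rewrite -mulrnA => /(order_pS_mulrn_eq0 p_prime (esO n)).
rewrite expnSr dvdn_pmul2r ?prime_gt0 // => /dvdnP[i ->].
by exists i; rewrite mulnC mulrnA (proj1 (esP n)).
Qed.

Lemma cyclic_socle_of_pdivisible (G : zmodType) p : prime p -> p_primary p G ->
  End_centrally_essential G -> (forall x : G, exists y, y *+ p = x) -> cyclic_socle G p.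
Proof.
move=> p_prime pG ceG Gdiv s t sp tp s_neq0.
have [Dv [Dv0 Dvs DvD Dvdiv Dv_socle]] := prufer_subgroup p_prime Gdiv sp s_neq0.
have [pi [piE piDv piId]] := pdivisible_summand p_prime pG Dv0 DvD Dvdiv.
have sO : order_pS p 0 s by rewrite /order_pS expn1 expn0 mulr1n; split=> //; apply/eqP.
have tp' : t *+ p ^ 1 = 0 by rewrite expn1.
have [r rE rs] := pdivisible_hom_extension p_prime pG Gdiv sO tp'.
have := centrally_essential_idem_semicentral ceG piE rE (fun x => piId _ (piDv x)) s.
rewrite piId // rs => tpi; apply: Dv_socle tp.
by rewrite tpi; apply: piDv.
Qed.

Section PureCyclic.
Variables (G : zmodType) (p n : nat) (c : G).
Hypotheses (p_prime : prime p) (cO : order_pS p n c).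

Lemma order_pS_pure : ~ (exists z, c *+ p ^ n = z *+ p ^ n.+1) ->
  forall m z, c *+ m = z *+ p ^ n.+1 -> c *+ m = 0.
Proof.
move=> c_notdiv m z cmz; have [->|m_gt0] := posnP m; first by rewrite mulr0n.
have [km kn E _] := egcdnP (p ^ n.+1) m_gt0.
have := dvdn_gcdr m (p ^ n.+1); case/(dvdn_pfactor _ _ p_prime) => i.
rewrite leq_eqVlt => /orP[/eqP-> gE|lt_in gE].
  by apply/(order_pS_mulrn_eq0 p_prime cO); rewrite -gE dvdn_gcdl.
case: c_notdiv; exists (z *+ km *+ p ^ (n - i)).
have cpi : c *+ p ^ i = z *+ km *+ p ^ n.+1.
  have := congr1 (fun k => c *+ k) E; rewrite /= -gE mulrnDr [(kn * _)%N]mulnC.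
  by rewrite mulrnA (proj1 cO) mul0rn add0r mulnC mulrnA cmz mulrnAC.
have -> : (p ^ n = p ^ i * p ^ (n - i))%N by rewrite -expnD subnKC.
by rewrite mulrnA cpi mulrnAC.
Qed.

Hypothesis c_pure : forall m z, c *+ m = z *+ p ^ n.+1 -> c *+ m = 0.

Lemma pure_order_pS_eqmod i j z z' :
  c *+ i + z *+ p ^ n.+1 = c *+ j + z' *+ p ^ n.+1 -> (i = j %[mod p ^ n.+1])%N.
Proof.
wlog le_ij : i j z z' / (i <= j)%N.
  move=> wl E; case: (leqP i j) => [le|/ltnW le]; first exact: wl E.
  by apply/esym; apply: wl (esym E).
move=> /esym/addr_eq_subr; rewrite -mulrnBr // -mulrnBl => /c_pure.
by move/(order_pS_mulrn_eq0 p_prime cO) => dv; apply/eqP; rewrite eq_sym eqn_mod_dvd.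
Qed.

Lemma pure_order_pS_coordinate : p_primary p G ->
  exists2 chi : G -> 'Z_(p ^ n.+1), {morph chi : x y / x + y} & chi c = 1.
Proof.
move=> pG; set q := (p ^ n.+1)%N.
have q_gt1 : (1 < q)%N by rewrite /q -(expn0 p) ltn_exp2l ?prime_gt1.
(* [chi] is first defined on [<c> + q G], killing [q G]: this is what makes the
   divisibility condition of [additive_extension] hold. *)
pose R y (a : 'Z_q) := exists i z, y = c *+ i + z *+ q /\ a = i%:R.
have Rfun y a b : R y a -> R y b -> a = b.
  move=> [i [z [-> ->]]] [j [z' [/pure_order_pS_eqmod ij ->]]].
  by rewrite -(Zp_nat_mod q_gt1 i) ij Zp_nat_mod.
have [f2 f2R] := functional_graph_fun (inhabits 0) Rfun.
have f2E i z : f2 (c *+ i + z *+ q) = i%:R by apply: f2R; exists i, z.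
pose S2 y := exists i z, y = c *+ i + z *+ q.
have S20 : S2 0 by exists 0%N, 0; rewrite mulr0n mul0rn addr0.
have S2D y1 y2 : S2 y1 -> S2 y2 -> S2 (y1 + y2).
  move=> [i1 [z1 ->]] [i2 [z2 ->]]; exists (i1 + i2)%N, (z1 + z2).
  by rewrite mulrnDr mulrnDl addrACA.
have f2D y1 y2 : S2 y1 -> S2 y2 -> f2 (y1 + y2) = f2 y1 + f2 y2.
  by move=> [i1 [z1 ->]] [i2 [z2 ->]]; rewrite addrACA -mulrnDr -mulrnDl !f2E natrD.
have f2_pdiv x (b : 'Z_q) : True ->
    (forall m, S2 (x *+ p *+ m) -> f2 (x *+ p *+ m) = b *+ m) ->
    exists2 d, True & d *+ p = b.
  move=> _ bx; have xq : x *+ p *+ p ^ n = c *+ 0 + x *+ q.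
    by rewrite mulr0n add0r -mulrnA -expnS.
  have bpn : b *+ p ^ n = 0 by rewrite -bx xq ?f2E //; exists 0%N, x.
  have : (q %| b * p ^ n)%N.
    have := congr1 val bpn; rewrite -[b in b *+ _]natr_Zp -mulrnA /= val_Zp_nat //.
    by move/eqP.
  move=> dv; have : (p ^ n * p %| p ^ n * b)%N by rewrite -expnSr mulnC.
  rewrite dvdn_pmul2l ?expn_gt0 ?prime_gt0 // => /dvdnP[k bk].
  by exists k%:R => //; rewrite -mulrnA -bk natr_Zp.
have [chi [chiD chiS _]] := @additive_extension G _ p S2 f2 (fun _ => True)
  p_prime pG S20 S2D f2D (fun _ _ => I) I (fun _ _ _ _ => I) f2_pdiv.
exists chi => //; have := chiS (c *+ 1 + 0 *+ q) (ex_intro _ 1%N (ex_intro _ 0 erefl)).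
by rewrite f2E mul0rn addr0 mulr1n.
Qed.

End PureCyclic.

Lemma cyclic_socle_of_finite_height (G : zmodType) p (w : G) k :
  prime p -> p_primary p G -> End_centrally_essential G -> w *+ p = 0 -> ~ (exists z, w = z *+ p ^ k) ->
  cyclic_socle G p.
Proof.
move=> p_prime pG ceG wp w_notdiv.
have w0 : exists z, w = z *+ p ^ 0 by exists w; rewrite expn0 mulr1n.
have [n [[c wc] c_notdiv]] :=
  @ex_threshold (fun k => exists z, w = z *+ p ^ k) k w0 w_notdiv.
have cO : order_pS p n c.
  split; first by rewrite expnSr mulrnA -wc.
  by rewrite -wc => w_eq0; apply: c_notdiv; exists 0; rewrite w_eq0 mul0rn.
have c_pure := order_pS_pure p_prime cO (ltac:(by rewrite -wc)).
have [chi chiD chic] := pure_order_pS_coordinate p_prime cO c_pure pG.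
set q := (p ^ n.+1)%N.
have q_gt1 : (1 < q)%N by rewrite /q -(expn0 p) ltn_exp2l ?prime_gt1.
have hom_from (v : G) : v *+ q = 0 -> is_endo (fun x => v *+ chi x).
  by move=> vq x y; rewrite chiD mulrn_Zp_add.
pose pi x := c *+ chi x.
have piE : is_endo pi := hom_from c (proj1 cO).
have piMn m : pi (c *+ m) = c *+ m.
  by rewrite /pi (addmorphMn chiD) chic mulrn_Zp_nat // (proj1 cO).
have pi_idem x : pi (pi x) = pi x by apply: piMn.
apply: (cyclic_socle_of_gen p_prime wp) => u up.
pose v := u - pi u.
have vp : v *+ p = 0 by rewrite mulrnBl up -(addmorphMn piE) up addmorph0 ?subrr.
have vq : v *+ q = 0 by rewrite /q expnS mulrnA vp mul0rn.
have := centrally_essential_idem_semicentral ceG piE (hom_from v vq) pi_idem c.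
rewrite -[c in pi c]mulr1n piMn mulr1n chic mulrn_Zp1 => v_pi.
have v0 : v = 0 by rewrite v_pi /v (addmorphB piE) pi_idem subrr.
have uE : u = c *+ chi u by apply/eqP; rewrite -subr_eq0 -/(pi u) -/v v0.
have : c *+ (chi u * p) = 0 by rewrite mulrnA -uE.
move/(order_pS_mulrn_eq0 p_prime cO) => dv.
have : (p ^ n * p %| chi u * p)%N by rewrite -expnSr.
rewrite dvdn_pmul2r ?prime_gt0 // => /dvdnP[i ui].
by exists i; rewrite uE ui mulnC mulrnA -wc.
Qed.

Lemma pdivisible_of_socle_height (G : zmodType) p : p_primary p G ->
  (forall w : G, w *+ p = 0 -> forall k, exists z, w = z *+ p ^ k) ->
  forall x : G, exists y, y *+ p = x.
Proof.
move=> pG heightG x; have [n xn] := pG x; elim: n x xn => [|n IH] x.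
  by rewrite expn0 mulr1n => ->; exists 0; rewrite mul0rn.
rewrite expnSr mulrnA => /heightG/(_ n.+1)[z xz].
have [|y yE] := IH (x - z *+ p); first by rewrite mulrnBl xz -mulrnA -expnS subrr.
by exists (z + y); rewrite mulrnDl yE addrC subrK.
Qed.

Lemma cyclic_socle_of_centrally_essential (G : zmodType) p : prime p -> p_primary p G ->
  End_centrally_essential G -> cyclic_socle G p.
Proof.
move=> p_prime pG ceG.
have [[w [k [wp w_notdiv]]]|heightG] :=
  pselect (exists w k, w *+ p = 0 /\ ~ exists z : G, w = z *+ p ^ k).
  exact: cyclic_socle_of_finite_height p_prime pG ceG wp w_notdiv.
apply: cyclic_socle_of_pdivisible => //; apply: pdivisible_of_socle_height => // w wp k.
by apply: contrapT => w_notdiv; apply: heightG; exists w, k.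
Qed.

(** * p-primary groups with cyclic socle *)

Lemma iso_Zpk_of_generator (G : zmodType) p n (e : G) : prime p -> order_pS p n e ->
  (forall x, exists i, x = e *+ i) -> iso_Zpk p n.+1 G.
Proof.
move=> p_prime eO eGen; set q := (p ^ n.+1)%N.
have q_gt1 : (1 < q)%N by rewrite /q -(expn0 p) ltn_exp2l ?prime_gt1.
have lt_q (i : 'Z_q) : (i < q)%N by case: i => i /=; rewrite Zp_cast.
pose R x (i : 'Z_q) := x = e *+ i.
have Rfun x i j : R x i -> R x j -> i = j.
  by move=> -> /(order_pS_eqmod p_prime eO); rewrite !modn_small // => /val_inj.
have [f fR] := functional_graph_fun (inhabits 0) Rfun.
have fE x : x = e *+ f x.
  have [i xi] := eGen x; have Rx : R x i%:R by rewrite /R mulrn_Zp_nat // (proj1 eO).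
  by rewrite (fR _ _ Rx).
exists f; split.
  by move=> x y; apply: fR; rewrite /R mulrn_Zp_add // -?fE // (proj1 eO).
by exists (fun i : 'Z_q => e *+ i) => [x | i]; [rewrite -fE | apply: fR].
Qed.

Lemma iso_Zpk_of_bounded (G : zmodType) p : prime p -> p_primary p G ->
  cyclic_socle G p -> (exists x : G, x != 0) ->
  (exists N, forall x : G, x *+ p ^ N = 0) ->
  exists k, (0 < k)%N /\ iso_Zpk p k G.
Proof.
move=> p_prime pG cs [x0 x0_neq0] [N GN].
have P0 : exists y : G, y *+ p ^ 0 <> 0 by exists x0; rewrite expn0 mulr1n; apply/eqP.
have PN : ~ exists y : G, y *+ p ^ N <> 0 by move=> [y]; rewrite GN.
have [n [[y yn] Gn]] := @ex_threshold (fun n => exists y : G, y *+ p ^ n <> 0) N P0 PN.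
have [e eO] := order_pS_exists pG yn.
have eGen x : exists i, x = e *+ i.
  by apply: (cyclic_socle_mulrn cs eO); apply: contrapT => xn; apply: Gn; exists x.
by exists n.+1; split=> //; apply: (iso_Zpk_of_generator p_prime eO eGen).
Qed.

Lemma order_pS_lift (G : zmodType) p n (e : G) : prime p -> p_primary p G ->
  cyclic_socle G p -> (exists y : G, y *+ p ^ n.+1 <> 0) -> order_pS p n e ->
  exists e', order_pS p n.+1 e' /\ e' *+ p = e.
Proof.
move=> p_prime pG cs [y yn] eO; have [z zO] := order_pS_exists pG yn.
have zpO : order_pS p n (z *+ p) by case: zO; split; rewrite -mulrnA -expnS.
have [i ei] := cyclic_socle_mulrn cs zpO (proj1 eO).
exists (z *+ i); split; last by rewrite mulrnAC.
split; first by rewrite mulrnAC (proj1 zO) mul0rn.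
by rewrite mulrnAC expnS mulrnA mulrnAC -ei; case: eO.
Qed.

Section PruferChains.
Variables (G : zmodType) (p : nat) (es : nat -> G) (zs : nat -> algC).
Hypotheses (p_prime : prime p) (pG : p_primary p G) (cs : cyclic_socle G p).
Hypotheses (esO : forall n, order_pS p n (es n)) (esp : forall n, es n.+1 *+ p = es n).
Hypothesis zsP : forall n, (p ^ n.+1).-primitive_root (zs n).
Hypothesis zsp : forall n, zs n.+1 ^+ p = zs n.

Definition prufer_rel x z := exists n i, x = es n *+ i /\ z = zs n ^+ i.

Lemma prufer_rel_common n i m j : exists K a b,
  [/\ es n *+ i = es K *+ a, zs n ^+ i = zs K ^+ a,
      es m *+ j = es K *+ b & zs m ^+ j = zs K ^+ b].
Proof.
exists (m + n)%N, (p ^ m * i)%N, (p ^ n * j)%N; rewrite mulrnA exprM.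
rewrite -(mulrn_chain esp) -(expr_chain zsp) addnC mulrnA exprM.
by rewrite -(mulrn_chain esp) -(expr_chain zsp).
Qed.

Lemma prufer_rel_eq x y z1 z2 : prufer_rel x z1 -> prufer_rel y z2 -> x = y <-> z1 = z2.
Proof.
move=> [n [i [-> ->]]] [m [j [-> ->]]].
have [K [a [b [-> -> -> ->]]]] := prufer_rel_common n i m j.
rewrite (order_pS_eqmod p_prime (esO K)); split=> [/eqP|/eqP].
  by rewrite -(eq_prim_root_expr (zsP K)) => /eqP.
by rewrite (eq_prim_root_expr (zsP K)) => /eqP.
Qed.

Lemma prufer_rel_total x : exists z, prufer_rel x z.
Proof.
have [M xM] := pG x.
have [|i xi] := cyclic_socle_mulrn cs (esO M) (x := x).
  by rewrite expnSr mulrnA xM mul0rn.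
by exists (zs M ^+ i), M, i.
Qed.

Lemma iso_Zpinf_of_chains : iso_Zpinf p G.
Proof.
have Rfun x z1 z2 : prufer_rel x z1 -> prufer_rel x z2 -> z1 = z2.
  by move=> R1 R2; apply/(prufer_rel_eq R1 R2).
have [f fR] := functional_graph_fun (inhabits 0) Rfun.
have fP x : prufer_rel x (f x).
  by have [z Rz] := prufer_rel_total x; rewrite (fR _ _ Rz).
exists f; split.
- move=> x y; apply: fR; have [n [i [-> ->]]] := fP x; have [m [j [-> ->]]] := fP y.
  have [K [a [b [-> -> -> ->]]]] := prufer_rel_common n i m j.
  by exists K, (a + b)%N; rewrite mulrnDr exprD.
- by move=> x y fxy; apply/(prufer_rel_eq (fP x) (fP y)); rewrite fxy.
- move=> z; split=> [[n zn]|[x <-]].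
    have zn1 : z ^+ (p ^ n.+1) = 1 by rewrite expnSr exprM zn expr1n.
    have [i zi] := prim_rootP (zsP n) zn1.
    by exists (es n *+ i); apply: fR; exists n, i.
  have [n [i [_ ->]]] := fP x; exists n.+1.
  by rewrite -exprM mulnC exprM (prim_expr_order (zsP n)) expr1n.
Qed.

End PruferChains.

Lemma iso_Zpinf_of_unbounded (G : zmodType) p : prime p -> p_primary p G ->
  cyclic_socle G p -> (exists x : G, x != 0) ->
  (forall N, exists x : G, x *+ p ^ N <> 0) -> iso_Zpinf p G.
Proof.
move=> p_prime pG cs [x0 x0_neq0] unb.
have x0p : x0 *+ p ^ 0 <> 0 by rewrite expn0 mulr1n; apply/eqP.
have [s sO] := order_pS_exists pG x0p.
have [es [_ esP]] := @dependent_choice G (fun n e => order_pS p n e)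
  (fun y x => y *+ p = x) s sO (fun n e => order_pS_lift p_prime pG cs (unb n.+1)).
have [z0 z0P] := C_prim_root_exists (prime_gt0 p_prime); rewrite -(expn1 p) in z0P.
have zs_step n (z : algC) : (p ^ n.+1).-primitive_root z ->
    exists y, (p ^ n.+2).-primitive_root y /\ y ^+ p = z.
  move=> zP; exists (p.-root z); rewrite rootCK ?prime_gt0 //; split=> //.
  by apply: (prim_root_pS_lift p_prime); rewrite rootCK ?prime_gt0.
have [zs [_ zsP]] := @dependent_choice algC (fun n z => (p ^ n.+1).-primitive_root z)
  (fun y x => y ^+ p = x) z0 z0P zs_step.
exact: (iso_Zpinf_of_chains p_prime pG cs (fun n => proj1 (esP n))
  (fun n => proj2 (esP n)) (fun n => proj1 (zsP n)) (fun n => proj2 (zsP n))).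
Qed.

Theorem lemma2p3 (p : nat) (G : zmodType) :
  prime p -> p_primary p G -> (exists x : G, x != 0%R) ->
  (End_centrally_essential G <->
   ((exists k : nat, (0 < k)%N /\ iso_Zpk p k G) \/ iso_Zpinf p G)).
Proof.
move=> p_prime pG G_neq0; split=> [ceG | isoG].
  have cs := cyclic_socle_of_centrally_essential p_prime pG ceG.
  have [bounded | unbounded] := pselect (exists N, forall x : G, x *+ p ^ N = 0).
    by left; apply: iso_Zpk_of_bounded.
  right; apply: iso_Zpinf_of_unbounded => // N; apply: contrapT => GN.
  by apply: unbounded; exists N => x; apply: contrapT => xN; apply: GN; exists x.
apply: centrally_essential_of_endo_commutative => //.
apply: endo_commutative_of_locally_invariant_cyclic.
case: isoG => [[k [_ isoG]] | isoG]; first exact: iso_Zpk_locally_invariant_cyclic isoG.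
exact: iso_Zpinf_locally_invariant_cyclic (prime_gt0 p_prime) pG isoG.
Qed.
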